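(* Let $p$ be a prime, $q=p^n$, $d$ a natural number with $(d,p)=1$, and $r$ a natural number with $r<d$. Then $$M_d^r=-e_{p,r}\,q^{r/p-r/2}+(e_{p,r}-1)q^{-r/2}.$$
   Context: $\mathcal{F}_d$ denotes the set of polynomials $f=\sum_{i=0}^d a_ix^i\in\mathbb{F}_q[x]$ with $a_d\neq 0$ and $a_i=0$ for every $i\ge 0$ divisible by $p$. For a nontrivial additive character $\psi$ of $\mathbb{F}_p$ and $f\in\mathcal{F}_d$, $L_{f,\psi}(z)=\exp\left(\sum_{r\ge1}\sum_{\alpha\in\mathbb{F}_{q^r}}\psi(\mathrm{Tr}_{\mathbb{F}_{q^r}/\mathbb{F}_p}f(\alpha))z^r/r\right)$ factors as $\prod_{i=1}^{d-1}(1-q^{1/2}\rho_iz)$ with $|\rho_i|=1$; $T^r_{f,\psi}=\sum_i\rho_i^r$ and $M_d^r$ is the average of $T^r_{f,\psi}$ over $f\in\mathcal{F}_d$ (independent of $\psi$). $e_{p,r}=1$ if $p\mid r$ and $0$ otherwise. *)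

From HB Require Import structures.
From mathcomp Require Import all_boot all_order all_algebra all_field.
Set Implicit Arguments. Unset Strict Implicit. Unset Printing Implicit Defensive.
Import Order.TTheory GRing.Theory Num.Theory.
Local Open Scope ring_scope.

Definition abs_trace (L : finFieldType) (p : nat) (y : L) : L :=
  \sum_(i < logn p #|L|) y ^+ (p ^ i).

(* psi(Tr y), where the nontrivial additive character psi of F_p is
   k |-> w^k, w = psi(1) a primitive p-th root of unity; the element
   Tr y of the prime field is identified with the k < p with Tr y = k. *)
Definition addchar (L : finFieldType) (p : nat) (w : algC) (y : L) : algC :=
  w ^+ (match [pick k : 'I_p | abs_trace p y == (k : nat)%:R] with
        | Some k => (k : nat) | None => 0%N end).

(* S_r(f) = sum_{alpha in F_{q^r}} psi(Tr_{F_{q^r}/F_p} f(alpha)),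
   with F_{q^r} := L r and F_q embedded in it via iota r. *)
Definition charsum (F : finFieldType) (p : nat) (w : algC)
  (L : nat -> finFieldType) (iota : forall s, {rmorphism F -> L s})
  (f : {poly F}) (r : nat) : algC :=
  \sum_(x : L r) addchar p w (map_poly (iota r) f).[x].

(* N-th coefficient of the formal power series
   exp(sum_{r>=1} S_r z^r / r) = sum_m A^m / m!  (only A truncated at
   degree N and m <= N contribute to the coefficient of z^N). *)
Definition Lcoef (F : finFieldType) (p : nat) (w : algC)
  (L : nat -> finFieldType) (iota : forall s, {rmorphism F -> L s})
  (f : {poly F}) (N : nat) : algC :=
  let A : {poly algC} :=
    \sum_(1 <= r < N.+1) (charsum p w iota f r / r%:R) *: 'X^r in
  \sum_(m < N.+1) (A ^+ m)`_N / (m`!)%:R.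

Definition Fd (F : finFieldType) (p d : nat) : {set {ffun 'I_d.+1 -> F}} :=
  [set a : {ffun 'I_d.+1 -> F} | (a ord_max != 0) && [forall i : 'I_d.+1, (p %| i)%N ==> (a i == 0)]].

Definition poly_of (F : finFieldType) (d : nat) (a : {ffun 'I_d.+1 -> F}) : {poly F} :=
  \poly_(i < d.+1) a (inord i).

Definition Tsum (k : nat) (rho : 'I_k -> algC) (r : nat) : algC :=
  \sum_(i < k) rho i ^+ r.

(* Newton's identities turn the factorisation of L_f into
   T^r_f = - q^(-r/2) S_r(f), where S_r(f) = \sum_(x in F_(q^r)) psi (Tr f(x)).
   Over F_d the coefficients a_i vary independently, so the sum of S_r(f)
   factors, for each x, into character sums \sum_b psi (Tr (b x^i)); such a sum
   vanishes unless Tr (b x^i) = 0 for all b in F_q, i.e. unless the relative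
   trace T(x^i) to F_q is 0.  Hence the average of S_r counts the x with
   T(x^i) = 0 for 0 < i < d, p \notdvd i, and so, as T(x^(p i)) = T(x^i)^p,
   for all 0 < i < d.  If the Frobenius orbit of x has length s | r, then
   T(x^i) is r/s times the i-th power sum of the s distinct orbit points; as
   s <= r < d, these vanish only if x = 0 or p | r/s, i.e. x in F_(q^(r/p)).
   The average is thus q^(r/p) if p | r, and 1 otherwise. *)

From HB Require Import structures.
From mathcomp Require Import all_boot all_order all_algebra all_field.
From mathcomp Require Import zify ring.
Set Implicit Arguments. Unset Strict Implicit. Unset Printing Implicit Defensive.
Import Order.TTheory GRing.Theory Num.Theory.
Local Open Scope ring_scope.

Lemma coef_exprn_congr (R : nzRingType) (P Q : {poly R}) j :
  (forall i, (i <= j)%N -> P`_i = Q`_i) ->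
  forall m i, (i <= j)%N -> (P ^+ m)`_i = (Q ^+ m)`_i.
Proof.
move=> PQ; elim=> [|m IHm] i le_ij; first by rewrite !expr0.
rewrite !exprS !coefM; apply: eq_bigr => k _.
rewrite PQ ?IHm //; first exact: leq_trans (leq_subr _ _) le_ij.
by apply: leq_trans le_ij; rewrite -ltnS.
Qed.

Lemma coef_exprn_eq0 (R : nzRingType) (P : {poly R}) m i :
  P`_0 = 0 -> (i < m)%N -> (P ^+ m)`_i = 0.
Proof.
move=> P0; elim: m i => [|m IHm] // i lt_im.
rewrite exprS coefM big1 // => -[[|k] lt_ki] /=; first by rewrite P0 mul0r.
by rewrite IHm ?mulr0 //; lia.
Qed.

Lemma deriv_prod_seq (R : comNzRingType) (I : eqType) (r : seq I) (f : I -> {poly R}) :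
  uniq r ->
  (\prod_(i <- r) f i)^`() = \sum_(i <- r) (f i)^`() * \prod_(j <- r | j != i) f j.
Proof.
elim: r => [|a r IHr] /=; first by rewrite !big_nil derivC.
case/andP=> a_notin_r uniq_r.
rewrite !big_cons derivM IHr // eqxx /= mulr_sumr.
have -> : \prod_(j <- r | j != a) f j = \prod_(j <- r) f j.
  rewrite big_seq_cond [RHS]big_seq; apply: eq_bigl => j.
  by case: (boolP (j \in r)) => //= jr; apply: contraNneq a_notin_r => <-.
congr (_ + _); rewrite [LHS]big_seq [RHS]big_seq; apply: eq_bigr => i ir.
rewrite big_cons mulrCA; case: eqP => // ai.
by rewrite ai ir in a_notin_r.
Qed.

Lemma deriv_prod (R : comNzRingType) (I : finType) (f : I -> {poly R}) :
  (\prod_i f i)^`() = \sum_i (f i)^`() * \prod_(j | j != i) f j.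
Proof. by rewrite deriv_prod_seq // index_enum_uniq. Qed.

Section ExpOfLog.
Variables (R : numFieldType) (s : nat -> R).

Definition log_series (M : nat) : {poly R} :=
  \sum_(1 <= k < M.+1) (s k / k%:R) *: 'X^k.

(* The coefficient of z^N in exp (\sum_k s k z^k / k); [Lcoef p w iota f] is
   the instance [s k = charsum p w iota f k]. *)
Definition exp_log_coef (N : nat) : R :=
  \sum_(m < N.+1) (log_series N ^+ m)`_N / (m`!)%:R.

Lemma coef_log_series M i :
  (log_series M)`_i = if (0 < i <= M)%N then s i / i%:R else 0.
Proof.
rewrite /log_series coef_sum.
rewrite (eq_bigr (fun k => if k == i then s k / k%:R else 0)); last first.
  by move=> k _; rewrite coefZ coefXn eq_sym; case: eqP; rewrite ?mulr1 ?mulr0.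
by rewrite -big_mkcond big_nat1_eq.
Qed.

Lemma exp_log_coef_widen M K j : (j <= M)%N -> (j < K)%N ->
  \sum_(m < K) (log_series M ^+ m)`_j / (m`!)%:R = exp_log_coef j.
Proof.
move=> le_jM lt_jK; rewrite /exp_log_coef.
rewrite (big_ord_widen K (fun m => (log_series j ^+ m)`_j / (m`!)%:R)) //.
rewrite [RHS]big_mkcond /=; apply: eq_bigr => m _.
rewrite (@coef_exprn_congr _ _ (log_series j) j) //; last first.
  move=> i le_ij; rewrite !coef_log_series le_ij (leq_trans le_ij le_jM).
  by rewrite !andbT.
case: ifP => // /negbT; rewrite -leqNgt => lt_jm.
by rewrite coef_exprn_eq0 ?mul0r // coef_log_series.
Qed.

Lemma exp_log_coef0 : exp_log_coef 0 = 1.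
Proof. by rewrite /exp_log_coef big_ord1 expr0 coefC divr1. Qed.

(* Coefficientwise form of E' = A' E for E = exp A. *)
Lemma exp_log_coefS N :
  N.+1%:R * exp_log_coef N.+1 = \sum_(k < N.+1) s k.+1 * exp_log_coef (N - k).
Proof.
set A := log_series N.+1.
set E := fun K => \sum_(m < K) ((m`!)%:R^-1) *: A ^+ m.
have coefE K j : (j <= N.+1)%N -> (j < K)%N -> (E K)`_j = exp_log_coef j.
  move=> le_jN lt_jK; rewrite -(exp_log_coef_widen le_jN lt_jK) coef_sum.
  by apply: eq_bigr => m _; rewrite coefZ mulrC.
have dE : (E N.+2)^`() = A^`() * E N.+1.
  rewrite raddf_sum big_ord_recl /= derivZ deriv_exp mulr0n scaler0 add0r mulr_sumr.
  apply: eq_bigr => m _; rewrite derivZ deriv_exp factS natrM invfM.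
  rewrite -scalerAr -scaler_nat scalerA; congr (_ *: _).
  by rewrite mulrAC mulVf ?mul1r // pnatr_eq0.
rewrite -(coefE N.+2) // mulr_natl -coef_deriv dE coefM; apply: eq_bigr => k _.
rewrite coef_deriv coef_log_series ltn_ord /=.
rewrite -[_ *+ k.+1]mulr_natr divfK ?pnatr_eq0 // coefE //; lia.
Qed.

End ExpOfLog.

Section PowerSums.
Variables (R : comNzRingType) (K : nat) (c : 'I_K -> R).

Definition prod_1subX : {poly R} := \prod_(i < K) (1 - c i *: 'X).

Definition power_sum k : R := \sum_(i < K) c i ^+ k.

(* Newton's identities, obtained from P' = - \sum_i c_i \prod_(j != i) (1 - c_j X)
   and the geometric expansion of 1 / (1 - c_i X) modulo X^(N+1). *)
Lemma coef_prod_1subXS N :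
  N.+1%:R * prod_1subX`_N.+1 = - \sum_(k < N.+1) power_sum k.+1 * prod_1subX`_(N - k).
Proof.
set P := prod_1subX; set Pi := fun i : 'I_K => \prod_(j < K | j != i) (1 - c j *: 'X).
have dP : P^`() = - \sum_i c i *: Pi i.
  rewrite /P /prod_1subX deriv_prod -sumrN; apply: eq_bigr => i _.
  by rewrite derivB derivC derivZ derivX sub0r mulNr -scalerAl mul1r.
have coef_Pi i : (c i *: Pi i)`_N = \sum_(k < N.+1) c i ^+ k.+1 * P`_(N - k).
  set G : {poly R} := \poly_(k < N.+1) (c i ^+ k).
  have geomG : (1 - c i *: 'X) * G = 1 - (c i *: 'X) ^+ N.+1.
    rewrite -[RHS]opprB subrX1 -mulNr opprB /G poly_def; congr (_ * _).
    by apply: eq_bigr => k _; rewrite exprZn.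
  have -> : c i *: Pi i = c i *: (P * G) + c i *: (Pi i * (c i *: 'X) ^+ N.+1).
    rewrite -scalerDr /P /prod_1subX (bigD1 i) //= mulrAC geomG.
    by rewrite mulrBl mul1r [_ * Pi i]mulrC subrK.
  rewrite coefD !coefZ exprZn -scalerAr coefZ coefMXn ltnSn !mulr0 addr0.
  rewrite coefMr mulr_sumr; apply: eq_bigr => k _.
  by rewrite coef_poly ltn_ord exprS [P`_ _ * _]mulrC mulrA.
rewrite mulr_natl -coef_deriv dP coefN coef_sum; congr (- _).
under eq_bigr do rewrite coef_Pi.
by rewrite exchange_big; apply: eq_bigr => k _; rewrite mulr_suml.
Qed.

End PowerSums.

Lemma newton_power_sums (R : numFieldType) (s : nat -> R) K (c : 'I_K -> R) :
  (forall N, exp_log_coef s N = (prod_1subX c)`_N) ->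
  forall N, (0 < N)%N -> s N = - power_sum c N.
Proof.
move=> sc N; elim/ltn_ind: N => [[|N]] // IHN _.
have := exp_log_coefS s N; rewrite sc coef_prod_1subXS.
rewrite big_ord_recr [in RHS]big_ord_recr /= subnn -sc exp_log_coef0 !mulr1.
have -> : \sum_(k < N) s k.+1 * exp_log_coef s (N - k) =
          \sum_(k < N) - power_sum c k.+1 * (prod_1subX c)`_(N - k).
  by apply: eq_bigr => k _; rewrite IHN ?sc // ltnS.
by rewrite opprD -sumrN; under eq_bigr do rewrite -mulNr; move/addrI.
Qed.

Section PcharExpn.
Variables (R : comNzRingType) (p : nat).
Hypothesis pcharRp : p \in [pchar R].

Lemma pchar_pnat_expn k : [pchar R].-nat (p ^ k)%N.
Proof.
rewrite (eq_pnat _ (pcharf_eq pcharRp)) pnatX pnat_id ?orbT //.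
exact: pcharf_prime pcharRp.
Qed.

Lemma exprD_pcharX k (x y : R) : (x + y) ^+ (p ^ k) = x ^+ (p ^ k) + y ^+ (p ^ k).
Proof. exact/exprDn_pchar/pchar_pnat_expn. Qed.

Lemma expr_sum_pcharX k (I : Type) (r : seq I) (P : pred I) (F : I -> R) :
  (\sum_(i <- r | P i) F i) ^+ (p ^ k) = \sum_(i <- r | P i) F i ^+ (p ^ k).
Proof.
apply: (big_morph (fun x => x ^+ (p ^ k)) (exprD_pcharX k)).
by rewrite expr0n expn_eq0 eqn0Ngt prime_gt0 // (pcharf_prime pcharRp).
Qed.

Lemma natr_inj_pchar a b : (a < p)%N -> (b < p)%N -> a%:R = b%:R :> R -> a = b.
Proof.
wlog le_ab : a b / (a <= b)%N.
  move=> IH lt_ap lt_bp eq_ab; have [/IH|/ltnW/IH] := leqP a b; first exact.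
  by move=> /(_ lt_bp lt_ap (esym eq_ab)).
move=> lt_ap lt_bp eq_ab.
have : (p %| b - a)%N by rewrite (dvdn_pcharf pcharRp) natrB // eq_ab subrr.
have [ba0 _ | /dvdn_leq le_p_ba /le_p_ba] := posnP (b - a); lia.
Qed.

End PcharExpn.

Lemma size_XnsubX (R : nzRingType) Q : (1 < Q)%N -> size ('X^Q - 'X : {poly R}) = Q.+1.
Proof. by move=> Q_gt1; rewrite size_polyDl ?size_polyXn // size_polyN size_polyX. Qed.

(* The fixed points of x |-> x^Q (Q = p^e) are roots of E = X^Q - X, so there
   are at most Q of them; X^(Q^k) - X = E * H vanishes on all of L, so the
   remaining points are roots of H, of degree Q^k - Q. *)
Lemma card_fixed_pcharX (L : finFieldType) p e k :
  p \in [pchar L] -> (0 < e)%N -> (0 < k)%N -> #|L| = ((p ^ e) ^ k)%N ->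
  #|[pred x : L | x ^+ (p ^ e) == x]| = (p ^ e)%N.
Proof.
move=> pL e_gt0 k_gt0 cardL; set Q := (p ^ e)%N; set A := [pred x : L | x ^+ Q == x].
have Q_gt1 : (1 < Q)%N.
  by rewrite -{1}(expn0 p) ltn_exp2l // prime_gt1 // (pcharf_prime pL).
have le_Q_Qk : (Q <= Q ^ k)%N by rewrite -{1}(expn1 Q) leq_pexp2l //; lia.
set E : {poly L} := 'X^Q - 'X.
have E_neq0 : E != 0 by rewrite -size_poly_eq0 size_XnsubX.
have rootE x : root E x = (x \in A) by rewrite /root !hornerE subr_eq0.
have cardA : (#|A| <= Q)%N.
  rewrite -ltnS -(size_XnsubX L Q_gt1) cardE max_poly_roots ?enum_uniq //.
  by apply/allP => x; rewrite mem_enum rootE.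
have expE j : E ^+ (Q ^ j) = 'X^(Q ^ j.+1) - 'X^(Q ^ j).
  have pQj : [pchar {poly L}].-nat (Q ^ j)%N.
    by rewrite -expnM; apply: pchar_pnat_expn; rewrite pchar_poly.
  by rewrite exprDn_pchar // exprNn_pchar // -exprM -expnS.
set H := \sum_(j < k) E ^+ (Q ^ j - 1).
have EH : 'X^(Q ^ k) - 'X = E * H.
  rewrite mulr_sumr (eq_bigr (fun j : 'I_k => E ^+ (Q ^ j))); last first.
    by move=> j _; rewrite -exprS subn1 prednK // expn_gt0 ltnW.
  under eq_bigr do rewrite expE.
  rewrite -(big_mkord xpredT (fun j => 'X^(Q ^ j.+1) - 'X^(Q ^ j))).
  by rewrite telescope_sumr // expn0.
have sizeXQk := size_XnsubX L (leq_trans Q_gt1 le_Q_Qk).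
have H_neq0 : H != 0.
  by apply/eqP=> H0; move: sizeXQk; rewrite EH H0 mulr0 size_poly0.
have sizeH : size H = (Q ^ k - Q).+1.
  move: sizeXQk; rewrite EH size_mul // size_XnsubX // addSn /= => eQH.
  by rewrite -subSn // -eQH addKn.
have cardAC : (#|[predC A]| <= Q ^ k - Q)%N.
  rewrite -ltnS -sizeH cardE max_poly_roots ?enum_uniq //.
  apply/allP => x; rewrite mem_enum inE -rootE => /negPf notEx.
  have : root ('X^(Q ^ k) - 'X) x by rewrite /root !hornerE -cardL expf_card subrr.
  by rewrite EH rootM notEx.
apply/eqP; rewrite eqn_leq cardA -(leq_add2r #|[predC A]|) cardC cardL -/Q.
by rewrite -{1}(subnKC le_Q_Qk) leq_add2l.
Qed.

Lemma finField_card_expn_gt0 (L : finFieldType) p m : #|L| = (p ^ m)%N -> (0 < m)%N.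
Proof. by case: m => // cardL; have := finNzRing_gt1 L; rewrite cardL. Qed.

Lemma pchar_fixed_natr (L : finFieldType) p m (x : L) :
  prime p -> #|L| = (p ^ m)%N -> x ^+ p = x -> exists k : 'I_p, x = k%:R.
Proof.
move=> p_pr cardL xp; have pL := card_finPcharP cardL p_pr.
have m_gt0 := finField_card_expn_gt0 cardL.
set A := [pred y : L | y ^+ p == y].
have cardA : #|A| = p.
  by have := @card_fixed_pcharX L p 1 m pL isT m_gt0; rewrite !expn1 => ->.
set B := [set (k%:R : L) | k : 'I_p].
have cardB : #|B| = #|A|.
  rewrite card_imset ?card_ord // => j k /(natr_inj_pchar pL (ltn_ord j) (ltn_ord k)).
  exact: val_inj.
have eqBA : B =i A.
  apply/(subset_cardP cardB)/subsetP => _ /imsetP[k _ ->].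
  by rewrite inE /= -(pFrobenius_autE pL) pFrobenius_aut_nat.
have : x \in B by rewrite eqBA inE /= xp.
by case/imsetP => k _ ->; exists k.
Qed.

Definition trace_form0 (p : nat) (F L : finFieldType) (iota : {rmorphism F -> L}) (y : L) : bool :=
  [forall a : F, abs_trace p (iota a * y) == 0].

Section AbsTrace.
Variables (p : nat) (L : finFieldType) (m : nat).
Hypotheses (p_pr : prime p) (cardL : #|L| = (p ^ m)%N).

Let pL : p \in [pchar L] := card_finPcharP cardL p_pr.

Local Notation Tr := (abs_trace p).

Lemma abs_traceE (y : L) : Tr y = \sum_(i < m) y ^+ (p ^ i).
Proof. by rewrite /abs_trace cardL pfactorK. Qed.

Lemma abs_traceD (y z : L) : Tr (y + z) = Tr y + Tr z.
Proof. by rewrite !abs_traceE -big_split; apply: eq_bigr => i _; rewrite exprD_pcharX. Qed.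

Lemma abs_trace0 : Tr (0 : L) = 0.
Proof. by apply/esym/(@addrI _ (Tr 0)); rewrite -abs_traceD !addr0. Qed.

Lemma abs_trace_pchar (y : L) : Tr y ^+ p = Tr y.
Proof.
have m_gt0 := finField_card_expn_gt0 cardL.
rewrite -[p in _ ^+ p]expn1 abs_traceE (expr_sum_pcharX pL).
under eq_bigr do rewrite -exprM -expnSr.
rewrite -(prednK m_gt0) big_ord_recr big_ord_recl /= prednK //.
by rewrite -cardL expf_card expn0 expr1 addrC.
Qed.

Lemma abs_trace_natr (y : L) : exists k : 'I_p, Tr y = k%:R.
Proof. exact: pchar_fixed_natr p_pr cardL (abs_trace_pchar y). Qed.

Variable w : algC.
Hypothesis w_prim : p.-primitive_root w.

Lemma addcharE (y : L) k : Tr y = k%:R -> addchar p w y = w ^+ k.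
Proof.
move=> Tr_y; rewrite /addchar; case: pickP => [j /eqP Tr_j | noj] /=.
  suff -> : (j : nat) = (k %% p)%N by rewrite (prim_expr_mod w_prim).
  apply: (natr_inj_pchar pL); rewrite ?ltn_mod ?prime_gt0 //.
  by rewrite GRing.natr_mod_pchar // -Tr_j.
have := noj (Ordinal (ltn_pmod k (prime_gt0 p_pr))).
by rewrite /= GRing.natr_mod_pchar // Tr_y eqxx.
Qed.

Lemma addcharD (y z : L) : addchar p w (y + z) = addchar p w y * addchar p w z.
Proof.
have [j Tr_y] := abs_trace_natr y; have [k Tr_z] := abs_trace_natr z.
rewrite (addcharE Tr_y) (addcharE Tr_z) -exprD (@addcharE _ (j + k)) //.
by rewrite abs_traceD Tr_y Tr_z natrD.
Qed.

Lemma addchar0 : addchar p w (0 : L) = 1.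
Proof. by rewrite (@addcharE _ 0) ?expr0 // abs_trace0. Qed.

Lemma addchar_eq1 (y : L) : (addchar p w y == 1) = (Tr y == 0).
Proof.
have [k Tr_y] := abs_trace_natr y.
by rewrite (addcharE Tr_y) Tr_y -(prim_order_dvd w_prim) (dvdn_pcharf pL).
Qed.

Lemma sum_addchar_scale (F : finFieldType) (iota : {rmorphism F -> L}) (y : L) :
  \sum_(a : F) addchar p w (iota a * y) = if trace_form0 p iota y then #|F|%:R else 0.
Proof.
case: ifP => [/forallP Tr0 | /negbT/forallPn[b Tr_b]].
  rewrite (eq_bigr (fun _ => 1)) ?sumr_const // => a _.
  by apply/eqP; rewrite addchar_eq1 Tr0.
set S := \sum_(a : F) _.
have : S = addchar p w (iota b * y) * S.
  rewrite /S [LHS](reindex_inj (addIr b)) /= mulr_sumr; apply: eq_bigr => a _.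
  by rewrite rmorphD mulrDl addcharD mulrC.
move/eqP; rewrite -subr_eq0 -{1}(mul1r S) -mulrBl mulf_eq0 subr_eq0 eq_sym.
by rewrite addchar_eq1 (negbTE Tr_b) => /eqP.
Qed.

End AbsTrace.

Lemma sumr_periodic (V : nmodType) (f : nat -> V) s u :
  (forall j, f (j + s)%N = f j) -> \sum_(j < u * s) f j = (\sum_(j < s) f j) *+ u.
Proof.
move=> f_per; elim: u => [|u IHu]; first by rewrite mul0n big_ord0 mulr0n.
rewrite mulSn big_split_ord /= mulrS -IHu; congr (_ + _).
by apply: eq_bigr => i _; rewrite addnC f_per.
Qed.

Lemma sumr_ord_mul (V : nmodType) n r (f : nat -> V) :
  \sum_(k < n * r) f k = \sum_(j < r) \sum_(l < n) f (j * n + l)%N.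
Proof.
elim: r f => [|r IHr] f; first by rewrite muln0 !big_ord0.
rewrite mulnS big_split_ord big_ord_recl /= (IHr (fun i => f (n + i)%N)); congr (_ + _).
by apply: eq_bigr => j _; apply: eq_bigr => l _; rewrite /bump /= add1n mulSn addnA.
Qed.

(* If y_0 != 0, then h = X \prod_(0 < j < s) (X - y_j), of degree s and without
   constant term, vanishes at every y_j but y_0; summing h over the y_j gives
   h(y_0) != 0 on one side and a combination of the power sums on the other. *)
Lemma eq0_of_power_sums0 (K : fieldType) s (y : nat -> K) : (0 < s)%N ->
  {in gtn s &, injective y} ->
  (forall i, (0 < i <= s)%N -> \sum_(j < s) y j ^+ i = 0) -> y 0%N = 0.
Proof.
move=> s_gt0 y_inj psum0; apply/eqP/negP => /negP y0_neq0.
set h : {poly K} := 'X * \prod_(z <- [seq y j | j <- iota 1 s.-1]) ('X - z%:P).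
have size_h : (size h <= s.+1)%N.
  rewrite /h mulrC size_mulX ?size_prod_XsubC ?size_map ?size_iota; first lia.
  by rewrite -size_poly_eq0 size_prod_XsubC.
have root_h j : (j < s)%N -> (h.[y j] == 0) = (0 < j)%N.
  move=> lt_js; rewrite /h hornerM hornerX mulf_eq0 -/(root _ _) root_prod_XsubC.
  apply/idP/idP => [/orP[/eqP yj0 | /mapP[i i_in yji]] | j_gt0].
  - by case: j yj0 {lt_js} => // y00; rewrite y00 eqxx in y0_neq0.
  - move: i_in; rewrite mem_iota => /andP[i_gt0 lt_i].
    by rewrite (y_inj j i) //; rewrite unfold_in /=; lia.
  - by apply/orP; right; apply/mapP; exists j; rewrite // mem_iota; lia.
have : \sum_(j < s) h.[y j] = h.[y 0%N].
  rewrite (bigD1 (Ordinal s_gt0)) //= big1 ?addr0 // => j j_neq0.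
  apply/eqP; rewrite root_h // lt0n; apply: contraNneq j_neq0 => j0.
  exact/eqP/val_inj.
under eq_bigr do rewrite (horner_coef_wide _ size_h).
have h0 : h`_0 = 0 by rewrite coefXM.
rewrite exchange_big big_ord_recl /= h0 big1 ?add0r; last by move=> j _; rewrite mul0r.
rewrite big1 => [/esym/eqP|i _]; first by rewrite root_h // ltnn.
by rewrite -mulr_sumr psum0 ?mulr0 // /bump /= add1n ltn_ord.
Qed.

Section RelativeTrace.
Variables (p n r : nat) (F L : finFieldType) (iota : {rmorphism F -> L}).
Hypotheses (p_pr : prime p) (cardF : #|F| = (p ^ n)%N)
  (cardL : #|L| = ((p ^ n) ^ r)%N) (r_gt0 : (0 < r)%N).

Local Notation q := (p ^ n)%N.

Let cardLp : #|L| = (p ^ (n * r))%N. Proof. by rewrite cardL expnM. Qed.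

Let pL : p \in [pchar L] := card_finPcharP cardLp p_pr.

Let n_gt0 : (0 < n)%N := finField_card_expn_gt0 cardF.

Definition rel_trace (y : L) : L := \sum_(j < r) y ^+ (q ^ j).

Lemma iota_fixed a j : iota a ^+ (q ^ j) = iota a.
Proof.
elim: j => [|j IHj]; first by rewrite expr1.
by rewrite expnS mulnC exprM IHj -rmorphXn -cardF expf_card.
Qed.

(* Transitivity of traces in the tower F_p < F < L, written inside L. *)
Lemma abs_trace_rel a y :
  abs_trace p (iota a * y) = \sum_(l < n) (iota a * rel_trace y) ^+ (p ^ l).
Proof.
rewrite (abs_traceE p_pr cardLp) (sumr_ord_mul n r (fun k => (iota a * y) ^+ (p ^ k))).
rewrite exchange_big; apply: eq_bigr => l _.
rewrite /rel_trace mulr_sumr (expr_sum_pcharX pL); apply: eq_bigr => j _.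
by rewrite expnD [(j * n)%N]mulnC expnM exprM exprMn iota_fixed.
Qed.

Lemma rel_trace_pchar y : rel_trace (y ^+ p) = rel_trace y ^+ p.
Proof.
rewrite -[p in RHS]expn1 (expr_sum_pcharX pL) expn1.
by apply: eq_bigr => j _; rewrite exprAC.
Qed.

(* Tr (iota a * y) is the value of \sum_l X^(p^l), of degree p^(n-1) < q,
   at iota a * T y; if T y != 0 these are q distinct points. *)
Lemma rel_trace_eq0 y : trace_form0 p iota y -> rel_trace y = 0.
Proof.
move=> /forallP Tr0; apply/eqP/negP => /negP Ty_neq0.
set g : {poly L} := \sum_(l < n) 'X^(p ^ l).
have p_gt1 := prime_gt1 p_pr.
have g1 : g`_1 = 1.
  rewrite /g coef_sum -(prednK n_gt0) big_ord_recl /= coefXn eqxx big1 ?addr0 // => l _.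
  by rewrite coefXn /bump /= add1n -{1}(expn0 p) eqn_exp2l.
have g_neq0 : g != 0 by apply: contra_eq_neq g1 => ->; rewrite coef0 eq_sym oner_neq0.
have size_g : (size g <= q)%N.
  apply: leq_trans (size_sum _ _ _) _; apply/bigmax_leqP => l _.
  by rewrite size_polyXn ltn_exp2l.
suff : (q < size g)%N by rewrite ltnNge size_g.
rewrite -cardF cardE -(size_map (fun a => iota a * rel_trace y)).
apply: max_poly_roots g_neq0 _ _.
  apply/allP => _ /mapP[a _ ->]; rewrite /root /g horner_sum.
  under eq_bigr do rewrite hornerXn.
  by rewrite -abs_trace_rel Tr0.
rewrite map_inj_uniq ?enum_uniq // => a b.
by move/(mulIf Ty_neq0)/fmorph_inj.
Qed.

Lemma rel_trace_expr_eq0 x d :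
  (forall i, (0 < i < d)%N -> ~~ (p %| i)%N -> trace_form0 p iota (x ^+ i)) ->
  forall i, (0 < i < d)%N -> rel_trace (x ^+ i) = 0.
Proof.
move=> Tr0 i; elim/ltn_ind: i => i IHi /andP[i_gt0 lt_id].
have [/dvdnP[j def_i] | p_ndvd_i] := boolP (p %| i)%N; last first.
  by apply/rel_trace_eq0/Tr0; rewrite ?i_gt0.
subst i.
have j_gt0 : (0 < j)%N by move: i_gt0; rewrite muln_gt0 => /andP[].
have lt_ji : (j < j * p)%N by rewrite -{1}(muln1 j) ltn_pmul2l // prime_gt1.
rewrite exprM rel_trace_pchar IHi; first by rewrite expr0n eqn0Ngt prime_gt0.
  exact: lt_ji.
by rewrite j_gt0 (ltn_trans lt_ji lt_id).
Qed.

Let expr_qr (x : L) : x ^+ (q ^ r) = x.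
Proof. by rewrite -cardL expf_card. Qed.

Section FrobeniusOrbit.
Variables (x : L) (s : nat).
Hypotheses (s_gt0 : (0 < s)%N) (x_qs : x ^+ (q ^ s) = x)
  (s_min : forall t, (0 < t)%N -> x ^+ (q ^ t) = x -> (s <= t)%N).

Lemma orbit_addn j : x ^+ (q ^ (j + s)) = x ^+ (q ^ j).
Proof. by rewrite expnD mulnC exprM x_qs. Qed.

Lemma orbit_modn j : x ^+ (q ^ j) = x ^+ (q ^ (j %% s)).
Proof.
rewrite {1}(divn_eq j s); elim: (j %/ s)%N => [|u IHu]; first by rewrite mul0n add0n.
by rewrite mulSn -addnA addnC orbit_addn.
Qed.

Lemma orbit_period_dvdn t : x ^+ (q ^ t) = x -> (s %| t)%N.
Proof.
move=> x_qt; apply/negPn/negP; rewrite /dvdn -lt0n => t_mod_gt0.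
have := s_min t_mod_gt0 (etrans (esym (orbit_modn t)) x_qt).
by rewrite leqNgt ltn_mod s_gt0.
Qed.

Lemma orbit_inj : {in gtn s &, injective (fun j => x ^+ (q ^ j))}.
Proof.
suff lt_orbit i j : (j < i < s)%N -> x ^+ (q ^ i) = x ^+ (q ^ j) -> False.
  move=> i j; rewrite !unfold_in /= => lt_is lt_js eq_ij.
  have [lt_ij|lt_ji|//] := ltngtP i j; exfalso.
    by apply: (lt_orbit j i _ (esym eq_ij)); rewrite lt_ij lt_js.
  by apply: (lt_orbit i j _ eq_ij); rewrite lt_ji lt_is.
case/andP=> lt_ji lt_is eq_ij.
have /orbit_period_dvdn/dvdn_leq : x ^+ (q ^ (j + (s - i))) = x.
  by rewrite expnD exprM -eq_ij -exprM -expnD subnKC ?x_qs // ltnW.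
rewrite addn_gt0 subn_gt0 lt_is orbT => /(_ isT); lia.
Qed.

Lemma rel_trace_orbit i :
  rel_trace (x ^+ i) = (\sum_(j < s) (x ^+ (q ^ j)) ^+ i) *+ (r %/ s).
Proof.
have s_dvd_r := orbit_period_dvdn (expr_qr x).
rewrite /rel_trace -[in LHS](divnK s_dvd_r).
rewrite (@sumr_periodic _ (fun j => (x ^+ i) ^+ (q ^ j))) => [|j].
  by congr (_ *+ _); apply: eq_bigr => j _; rewrite exprAC.
by rewrite !(exprAC _ i) orbit_addn.
Qed.

End FrobeniusOrbit.

(* The locus W of the x in L at which every monomial character
   a |-> psi (Tr (iota a * x^i)) with 0 < i < d, p \notdvd i, is trivial:
   the subfield of order q^(r/p) if p | r, and {0} otherwise. *)
Definition Wlocus (x : L) : bool :=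
  if (p %| r)%N then x ^+ (q ^ (r %/ p)) == x else x == 0.

Lemma Wlocus_of_trace_form0 x d : (r < d)%N ->
  (forall i, (0 < i < d)%N -> ~~ (p %| i)%N -> trace_form0 p iota (x ^+ i)) -> Wlocus x.
Proof.
move=> lt_rd Tr0; have trace0 := rel_trace_expr_eq0 Tr0.
have ex_s : exists t, (0 < t)%N && (x ^+ (q ^ t) == x).
  by exists r; rewrite r_gt0 expr_qr eqxx.
have [s /andP[s_gt0 /eqP x_qs] s_min] := find_ex_minn ex_s.
have {}s_min t : (0 < t)%N -> x ^+ (q ^ t) = x -> (s <= t)%N.
  by move=> t_gt0 /eqP x_qt; apply: s_min; rewrite t_gt0.
have s_dvd_r := orbit_period_dvdn s_gt0 x_qs s_min (expr_qr x).
set u := (r %/ s)%N; have def_r : r = (u * s)%N by rewrite divnK.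
have [p_dvd_u | p_ndvd_u] := boolP (p %| u)%N.
  rewrite /Wlocus def_r dvdn_mulr //= -divn_mulAC //.
  by rewrite (orbit_modn x_qs) modnMl expn0 expr1.
have u_neq0 : u%:R != 0 :> L by rewrite -(dvdn_pcharf pL).
have lt_sd : (s < d)%N by apply: leq_ltn_trans lt_rd; apply: dvdn_leq.
suff x0 : x = 0.
  rewrite /Wlocus x0 eqxx; case: ifP => // _.
  by rewrite expr0n !expn_eq0 eqn0Ngt prime_gt0.
have := eq0_of_power_sums0 s_gt0 (orbit_inj s_gt0 x_qs s_min).
rewrite expr1; apply => i /andP[i_gt0 le_is].
have := trace0 i; rewrite i_gt0 (leq_ltn_trans le_is lt_sd) => /(_ isT)/eqP.
rewrite (rel_trace_orbit s_gt0 x_qs s_min) -/u -mulr_natr mulf_eq0 (negbTE u_neq0).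
by rewrite orbF => /eqP.
Qed.

Lemma trace_form0_of_Wlocus x i : (0 < i)%N -> Wlocus x -> trace_form0 p iota (x ^+ i).
Proof.
move=> i_gt0; rewrite /Wlocus; case: ifP => [p_dvd_r /eqP x_qt | _ /eqP->]; last first.
  by apply/forallP => a; rewrite expr0n eqn0Ngt i_gt0 mulr0 (abs_trace0 p_pr cardLp).
set t := (r %/ p)%N; apply/forallP => a; set z := iota a * x ^+ i.
have z_qt : z ^+ (q ^ t) = z by rewrite /z exprMn iota_fixed exprAC x_qt.
have def_nr : (n * r = p * (n * t))%N by rewrite /t mulnCA [(p * _)%N]mulnC divnK.
rewrite (abs_traceE p_pr cardLp) def_nr (@sumr_periodic _ (fun k => z ^+ (p ^ k))) => [|k].
  by rewrite mulrn_pchar.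
by rewrite expnD mulnC exprM expnM z_qt.
Qed.

Lemma card_Wlocus :
  #|[pred x : L | Wlocus x]| = if (p %| r)%N then (q ^ (r %/ p))%N else 1%N.
Proof.
rewrite /Wlocus; case: ifP => [p_dvd_r | _]; last first.
  by rewrite -(card1 (0 : L)); apply: eq_card => x; rewrite !inE.
have t_gt0 : (0 < r %/ p)%N by rewrite divn_gt0 ?prime_gt0 // dvdn_leq.
rewrite -expnM; apply: (card_fixed_pcharX (k := p) pL).
- by rewrite muln_gt0 n_gt0.
- exact: prime_gt0.
- by rewrite cardLp -expnM -mulnA divnK.
Qed.

End RelativeTrace.

Section CharsumOverFd.
Variables (p n d r : nat) (F : finFieldType) (L : nat -> finFieldType).
Variables (iota : forall s, {rmorphism F -> L s}) (w : algC).
Hypotheses (p_pr : prime p) (cardF : #|F| = (p ^ n)%N) (cardL : #|L r| = ((p ^ n) ^ r)%N)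
  (r_gt0 : (0 < r)%N) (lt_rd : (r < d)%N) (w_prim : p.-primitive_root w).

Let cardLp : #|L r| = (p ^ (n * r))%N. Proof. by rewrite cardL expnM. Qed.

Local Notation psi := (addchar p w).

Definition coef_allowed (i : 'I_d.+1) : pred F :=
  [pred b | ((p %| i)%N ==> (b == 0)) && ((i == ord_max) ==> (b != 0))].

Lemma Fd_family : Fd F p d =i family coef_allowed.
Proof.
move=> a; rewrite inE; apply/andP/familyP => [[lead_a /forallP a0] i | a_allowed].
  by rewrite inE a0; apply/implyP => /eqP->.
split; first by have /andP[_] := a_allowed ord_max; rewrite eqxx.
by apply/forallP => i; have /andP[] := a_allowed i.
Qed.

Lemma card_Fd_gt0 : coprime d p -> (0 < #|Fd F p d|)%N.
Proof.
move=> coprime_dp; apply/card_gt0P; exists [ffun i => (i == ord_max)%:R].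
rewrite inE ffunE eqxx oner_eq0; apply/forallP => i; rewrite ffunE.
apply/implyP; have [-> p_dvd_d|] := eqVneq i ord_max; last by rewrite eqxx.
by move: coprime_dp; rewrite coprime_sym prime_coprime // p_dvd_d.
Qed.

Lemma charsum_poly_of a : charsum p w iota (poly_of a) r =
  \sum_(x : L r) \prod_(i < d.+1) psi (iota r (a i) * x ^+ i).
Proof.
apply: eq_bigr => x _.
have size_a : (size (map_poly (iota r) (poly_of a)) <= d.+1)%N.
  by rewrite size_map_poly size_poly.
rewrite (horner_coef_wide _ size_a).
rewrite (big_morph psi (addcharD p_pr cardLp w_prim) (addchar0 p_pr cardLp w_prim)).
by apply: eq_bigr => i _; rewrite coef_map coef_poly ltn_ord inord_val.
Qed.

Lemma prod_sum_addchar_allowed (x : L r) :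
  \prod_(i < d.+1) \sum_(b | coef_allowed i b) psi (iota r b * x ^+ i) =
  if Wlocus p n r x then #|Fd F p d|%:R else 0.
Proof.
case: ifP => [Wx | /negbT notWx].
  have psi1 i b : coef_allowed i b -> psi (iota r b * x ^+ i) = 1.
    case/andP=> /implyP b0 _; have [-> | b_neq0] := eqVneq b 0.
      by rewrite rmorph0 mul0r (addchar0 p_pr cardLp w_prim).
    have i_gt0 : (0 < i)%N.
      by rewrite lt0n; apply: contra_neq b_neq0 => i0; apply/eqP/b0; rewrite i0 dvdn0.
    apply/eqP; rewrite (addchar_eq1 p_pr cardLp w_prim).
    exact: forallP (trace_form0_of_Wlocus (iota r) p_pr cardF cardL i_gt0 Wx) b.
  rewrite bigA_distr_big_dep (eq_card Fd_family) -sum1_card natr_sum.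
  by apply: eq_bigr => a /familyP a_allowed; rewrite big1 // => i _; apply/psi1/a_allowed.
have : ~~ [forall i : 'I_d, (0 < i)%N ==> ~~ (p %| i)%N ==> trace_form0 p (iota r) (x ^+ i)].
  apply: contra notWx => /forallP Tr0.
  apply: (Wlocus_of_trace_form0 (iota := iota r) p_pr cardF cardL r_gt0 lt_rd).
  move=> i /andP[i_gt0 lt_id] p_ndvd_i.
  by have := Tr0 (Ordinal lt_id); rewrite /= i_gt0 p_ndvd_i.
rewrite negb_forall => /existsP[i]; rewrite !negb_imply => /and3P[i_gt0 p_ndvd_i notTr0].
rewrite (bigD1 (widen_ord (leqnSn d) i)) //=.
have -> : \sum_(b | coef_allowed (widen_ord (leqnSn d) i) b) psi (iota r b * x ^+ i) = 0.
  rewrite (eq_bigl xpredT) => [|b]; last first.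
    by rewrite /coef_allowed /= (negPf p_ndvd_i) -val_eqE /= ltn_eqF.
  by rewrite (sum_addchar_scale p_pr cardLp w_prim) (negPf notTr0).
by rewrite mul0r.
Qed.

Lemma sum_charsum_Fd :
  \sum_(a in Fd F p d) charsum p w iota (poly_of a) r =
  #|Fd F p d|%:R * #|[pred x : L r | Wlocus p n r x]|%:R.
Proof.
rewrite (eq_bigr _ (fun a _ => charsum_poly_of a)) exchange_big /=.
rewrite (eq_bigr (fun x => if Wlocus p n r x then #|Fd F p d|%:R else 0)) => [|x _].
  by rewrite -big_mkcond sumr_const mulr_natr.
rewrite -prod_sum_addchar_allowed bigA_distr_big_dep.
by apply: eq_bigl => a; rewrite Fd_family.
Qed.

End CharsumOverFd.

Lemma Tsum_of_Lcoef (p : nat) (F : finFieldType) (L : nat -> finFieldType)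
  (iota : forall s, {rmorphism F -> L s}) (w : algC) (f : {poly F})
  k (rho : 'I_k -> algC) (c : algC) r :
  c != 0 -> (0 < r)%N ->
  (forall N, Lcoef p w iota f N = (\prod_(i < k) (1 - (c * rho i) *: 'X))`_N) ->
  Tsum rho r = - charsum p w iota f r / c ^+ r.
Proof.
move=> c_neq0 r_gt0 L_eq.
rewrite (newton_power_sums (s := fun k => charsum p w iota f k) L_eq r_gt0).
rewrite opprK /power_sum; under eq_bigr do rewrite exprMn.
by rewrite -mulr_sumr mulrC mulKf // expf_neq0.
Qed.

Theorem corollary1 (p n d r : nat) (F : finFieldType)
  (L : nat -> finFieldType) (iota : forall s, {rmorphism F -> L s})
  (w : algC) (rho : {poly F} -> 'I_d.-1 -> algC) :
  prime p -> #|F| = (p ^ n)%N -> coprime d p ->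
  (0 < r)%N -> (r < d)%N ->
  (forall s, (0 < s)%N -> #|L s| = ((p ^ n) ^ s)%N) ->
  p.-primitive_root w ->
  (forall a, a \in Fd F p d -> forall N : nat,
      Lcoef p w iota (poly_of a) N =
      (\prod_(i < d.-1) (1 - (sqrtC (p ^ n)%:R * rho (poly_of a) i) *: 'X))`_N) ->
  (\sum_(a in Fd F p d) Tsum (rho (poly_of a)) r) / #|Fd F p d|%:R =
  - (p %| r)%:R * ((p ^ n)%:R ^+ (r %/ p) / sqrtC (p ^ n)%:R ^+ r)
  + ((p %| r)%:R - 1) / sqrtC (p ^ n)%:R ^+ r.
Proof.
move=> p_pr cardF coprime_dp r_gt0 lt_rd cardL w_prim L_eq.
set sq := sqrtC _.
have sq_neq0 : sq != 0 by rewrite sqrtC_eq0 pnatr_eq0 expn_eq0 eqn0Ngt prime_gt0.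
have Fd_neq0 : #|Fd F p d|%:R != 0 :> algC by rewrite pnatr_eq0 -lt0n card_Fd_gt0.
rewrite (eq_bigr _ (fun a Fd_a => Tsum_of_Lcoef sq_neq0 r_gt0 (L_eq a Fd_a))).
rewrite -mulr_suml sumrN (sum_charsum_Fd iota p_pr cardF (cardL r r_gt0) r_gt0 lt_rd w_prim).
rewrite (card_Wlocus p_pr cardF (cardL r r_gt0) r_gt0).
by case: (p %| r)%N; rewrite natrX /=; field; rewrite Fd_neq0 expf_neq0.
Qed.
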